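(* Let $C$ be a finite set of level constraints in normal form with $\mathcal{I}(C) \cap \mathcal{I}_{fresh} = \emptyset$. If $C; id \leadsto^* \bot$ by a finite sequence of unification steps, then there is no level substitution $\theta$ with $\theta \vDash C$.
   Context: Levels: $l ::= i \mid \mathtt{z} \mid \mathtt{s}\,l \mid l \sqcup l'$, $i$ in an infinite totally ordered set $\mathcal{I}$ of level variables; $\simeq$ is the smallest congruence (closed under constructors and substitution of levels for variables) containing $i_1 \sqcup (i_2 \sqcup i_3) \approx (i_1 \sqcup i_2) \sqcup i_3$, $i_1 \sqcup i_2 \approx i_2 \sqcup i_1$, $\mathtt{s}(i_1 \sqcup i_2) \approx \mathtt{s}\,i_1 \sqcup \mathtt{s}\,i_2$, $i \sqcup \mathtt{s}\,i \approx \mathtt{s}\,i$, $i \sqcup \mathtt{z} \approx i$, $i \sqcup i \approx i$. Normal form of levels: $\mathtt{s}^k\,\mathtt{z} \sqcup (\sqcup_{i \in V} \mathtt{s}^{n_i}\,i)$ with $V$ a strictly increasing sequence of variables, $n_i \le k$; every $l$ has a unique normal form $\hat l \simeq l$. A constraint $l_1 = l_2$ is in normal form if both sides are in normal form, each variable occurring on both sides has the same exponent on both sides, and at least one exponent (of $\mathtt{z}$ or of a variable, on either side) is $0$; $\widehat{C}$ denotes putting each constraint of $C$ in normal form (normalize both sides, for a variable on both sides drop the occurrence with smaller exponent, then subtract the minimum exponent from all exponents). $\theta \vDash C$ means $l_1\theta \simeq l_2\theta$ for all $l_1 = l_2 \in C$. $id$ is the identity substitution. For substitutions: $dom\,\theta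 = \{i \mid i\theta \ne i\}$; $\mathcal{I}(l)$ is the set of variables of $l$; $range\,\theta = \bigcup_{i \in dom\,\theta} \mathcal{I}(i\theta)$; $\mathcal{I}(\theta) = dom\,\theta \cup range\,\theta$; $\widehat{\theta} = \{i \mapsto \widehat{i\theta}\}_{i \in dom\,\theta}$; $\theta\{l/j\} = \{i \mapsto (i\theta)\{l/j\}\}_{i \in dom\,\theta}$; $\mathcal{I}_{fresh} \subsetneq \mathcal{I}$ is a fixed infinite set of fresh variables. In normal-form levels, $\mathtt{z} \sqcup i$ means $\mathtt{s}^0\mathtt{z} \sqcup \mathtt{s}^0 i$, and ''$\mathtt{s}^m\,x \in l$'' means $\mathtt{s}^m\,x$ is a summand of $l$. The unification steps on pairs $C;\theta$ are: (Trivial) $\{l = l\} \cup C; \theta \leadsto C; \theta$. (Orient) $\{l = l'\} \cup C; \theta \leadsto \{l' = l\} \cup C; \theta$ if $l'$ is $\mathtt{z}$ or $\mathtt{z} \sqcup i$. (Eliminate 1) $\{\mathtt{z} \sqcup i = l\} \cup C; \theta \leadsto \widehat{C\{l/i\}}; (\widehat{\theta\{l/i\}}, i \mapsto l)$ if $i$ does not occur in $l$. (Eliminate 2) $\{\mathtt{z} \sqcup i = l\} \cup C; \theta \leadsto \widehat{C\{l'/i\}}; (\widehat{\theta\{l'/i\}}, i \mapsto l')$ where $l' = l\{i'/i\}$ for some $i' \in \mathcal{I}_{fresh} \setminus \mathcal{I}(i, l, C, \theta)$, if $\mathtt{s}^0\,i \in l$. (Decompose) $\{\mathtt{z} = \mathtt{z}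 \sqcup (\sqcup_{i \in V} i)\} \cup C; \theta \leadsto \{\mathtt{z} \sqcup i = \mathtt{z}\}_{i \in V} \cup C; \theta$. (Clash) $\{\mathtt{z} = l\} \cup C; \theta \leadsto \bot$ if $\mathtt{s}^n\,i \in l$ or $\mathtt{s}^n\,\mathtt{z} \in l$ for some $n \ne 0$. *)

From HB Require Import structures.
From mathcomp Require Import all_boot.

Set Implicit Arguments.
Unset Strict Implicit.
Unset Printing Implicit Defensive.

(* Level variables: the infinite totally ordered set I is taken to be nat. *)
Inductive Level : Type :=
| LVar of nat
| LZ
| LS of Level
| LMax of Level & Level.

Fixpoint level_eqb (a b : Level) : bool :=
  match a, b with
  | LVar i, LVar j => i == j
  | LZ, LZ => true
  | LS a', LS b' => level_eqb a' b'
  | LMax a1 a2, LMax b1 b2 => level_eqb a1 b1 && level_eqb a2 b2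
  | _, _ => false
  end.

Lemma level_eqP : Equality.axiom level_eqb.
Proof.
elim=> [i||a IH|a1 IH1 a2 IH2] [j||b|b1 b2] /=; try by constructor.
- by apply: (iffP eqP) => [->|[]].
- by apply: (iffP (IH b)) => [->|[]].
- apply: (iffP andP) => [[/IH1 -> /IH2 ->]|[<- <-]] //.
  by split; [apply/IH1|apply/IH2].
Qed.

HB.instance Definition _ := hasDecEq.Build Level level_eqP.

Definition sn (n : nat) (l : Level) : Level := iter n LS l.

Inductive lequiv : Level -> Level -> Prop :=
| le_refl l : lequiv l l
| le_sym a b : lequiv a b -> lequiv b a
| le_trans a b c : lequiv a b -> lequiv b c -> lequiv a c
| le_S a b : lequiv a b -> lequiv (LS a) (LS b)
| le_Max a a' b b' : lequiv a a' -> lequiv b b' -> lequiv (LMax a b) (LMax a' b')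
| ax_assoc l1 l2 l3 : lequiv (LMax l1 (LMax l2 l3)) (LMax (LMax l1 l2) l3)
| ax_comm l1 l2 : lequiv (LMax l1 l2) (LMax l2 l1)
| ax_Sdist l1 l2 : lequiv (LS (LMax l1 l2)) (LMax (LS l1) (LS l2))
| ax_Sabs l : lequiv (LMax l (LS l)) (LS l)
| ax_zero l : lequiv (LMax l LZ) l
| ax_idem l : lequiv (LMax l l) l.

Fixpoint vars (l : Level) : seq nat :=
  match l with
  | LVar i => [:: i]
  | LZ => [::]
  | LS l' => vars l'
  | LMax a b => vars a ++ vars b
  end.

Fixpoint lsubst (th : nat -> Level) (l : Level) : Level :=
  match l with
  | LVar i => th i
  | LZ => LZ
  | LS l' => LS (lsubst th l')
  | LMax a b => LMax (lsubst th a) (lsubst th b)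
  end.

Definition lsubst1 (l' : Level) (j : nat) (l : Level) : Level :=
  lsubst (fun x => if x == j then l' else LVar x) l.

(* data (k, [:: (i1,n1); ...; (im,nm)]) represents
   s^k z |_| (s^n1 i1 |_| (s^n2 i2 |_| ... s^nm im)), or s^k z if m = 0 *)
Fixpoint joinl (vs : seq (nat * nat)) : Level :=
  match vs with
  | [::] => LZ
  | [:: p] => sn p.2 (LVar p.1)
  | p :: vs' => LMax (sn p.2 (LVar p.1)) (joinl vs')
  end.

Definition nf_level (k : nat) (vs : seq (nat * nat)) : Level :=
  match vs with
  | [::] => sn k LZ
  | _ => LMax (sn k LZ) (joinl vs)
  end.

Definition nf_valid (k : nat) (vs : seq (nat * nat)) : bool :=
  sorted ltn (map fst vs) && all (fun p => p.2 <= k) vs.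

Definition is_nf (l : Level) : Prop :=
  exists k vs, nf_valid k vs /\ l = nf_level k vs.

Fixpoint ins (p : nat * nat) (vs : seq (nat * nat)) : seq (nat * nat) :=
  match vs with
  | [::] => [:: p]
  | q :: vs' =>
      if p.1 < q.1 then p :: vs
      else if p.1 == q.1 then (p.1, maxn p.2 q.2) :: vs'
      else q :: ins p vs'
  end.

Definition mergeV (vs ws : seq (nat * nat)) : seq (nat * nat) := foldr ins ws vs.

Fixpoint norm (l : Level) : nat * seq (nat * nat) :=
  match l with
  | LZ => (0, [::])
  | LVar i => (0, [:: (i, 0)])
  | LS l' => let: (k, vs) := norm l' in (k.+1, [seq (p.1, p.2.+1) | p <- vs])
  | LMax a b => let: (ka, va) := norm a in let: (kb, vb) := norm b in
                (maxn ka kb, mergeV va vb)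
  end.

Definition hat (l : Level) : Level := nf_level (norm l).1 (norm l).2.

(* summands s^m x of a (normal-form) level: (m, None) for s^m z,
   (m, Some i) for s^m i *)
Fixpoint atoms (l : Level) : seq (nat * option nat) :=
  match l with
  | LZ => [:: (0, None)]
  | LVar i => [:: (0, Some i)]
  | LS l' => match l' with
             | LMax _ _ => [::]
             | _ => [seq (p.1.+1, p.2) | p <- atoms l']
             end
  | LMax a b => atoms a ++ atoms b
  end.

Definition cstr := (Level * Level)%type.

Definition cvars (c : cstr) : seq nat := vars c.1 ++ vars c.2.

Definition csubst1 (l' : Level) (j : nat) (c : cstr) : cstr :=
  (lsubst1 l' j c.1, lsubst1 l' j c.2).

Definition cstr_nf (c : cstr) : Prop :=
  exists k1 vs1 k2 vs2,
    nf_valid k1 vs1 /\ nf_valid k2 vs2 /\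
    c.1 = nf_level k1 vs1 /\ c.2 = nf_level k2 vs2 /\
    (forall i n m, (i, n) \in vs1 -> (i, m) \in vs2 -> n = m) /\
    ((k1 == 0) || (k2 == 0) || has (fun p => p.2 == 0) (vs1 ++ vs2)).

(* \hat c : normalize both sides, drop for each variable on both sides the
   occurrence with smaller exponent, subtract the minimum exponent *)
Definition cnorm_data (k1 : nat) (vs1 : seq (nat * nat))
                      (k2 : nat) (vs2 : seq (nat * nat)) : cstr :=
  let keep ws := fun p : nat * nat =>
      all (fun q : nat * nat => (q.1 != p.1) || (q.2 <= p.2)) ws in
  let vs1' := filter (keep vs2) vs1 in
  let vs2' := filter (keep vs1) vs2 in
  let m := foldr minn (minn k1 k2) (map snd (vs1' ++ vs2')) in
  (nf_level (k1 - m) [seq (p.1, p.2 - m) | p <- vs1'],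
   nf_level (k2 - m) [seq (p.1, p.2 - m) | p <- vs2']).

Definition cnorm (c : cstr) : cstr :=
  cnorm_data (norm c.1).1 (norm c.1).2 (norm c.2).1 (norm c.2).2.

Definition sat (th : nat -> Level) (C : seq cstr) : Prop :=
  forall c, c \in C -> lequiv (lsubst th c.1) (lsubst th c.2).

Definition idS : nat -> Level := LVar.

Definition inI (th : nat -> Level) (j : nat) : Prop :=
  th j <> LVar j \/ exists i, th i <> LVar i /\ j \in vars (th i).

Definition subst_sub (th : nat -> Level) (l : Level) (j : nat) : nat -> Level :=
  fun i => if th i == LVar i then LVar i else lsubst1 l j (th i).

Definition subst_hat (th : nat -> Level) : nat -> Level :=
  fun i => if th i == LVar i then LVar i else hat (th i).

Definition subst_ext (th : nat -> Level) (i : nat) (l : Level) : nat -> Level :=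
  fun x => if x == i then l else th x.

(* A finite set of constraints is represented by a list; "{c} \cup D" is
   matched up to membership (C =i c :: D).  None is bottom. *)
Definition ustate := (seq cstr * (nat -> Level))%type.

Inductive ustep (fresh : pred nat) : ustate -> option ustate -> Prop :=
| st_trivial C D th l :
    C =i (l, l) :: D -> ustep fresh (C, th) (Some (D, th))
| st_orient C D th l l' :
    C =i (l, l') :: D ->
    (l' = LZ \/ exists i, l' = LMax LZ (LVar i)) ->
    ustep fresh (C, th) (Some ((l', l) :: D, th))
| st_elim1 C D th i l :
    C =i (LMax LZ (LVar i), l) :: D ->
    i \notin vars l ->
    ustep fresh (C, th)
      (Some ([seq cnorm (csubst1 l i c) | c <- D],
             subst_ext (subst_hat (subst_sub th l i)) i l))
| st_elim2 C D th i l i' :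
    C =i (LMax LZ (LVar i), l) :: D ->
    (0, Some i) \in atoms l ->
    fresh i' ->
    i' != i -> i' \notin vars l ->
    (forall c, c \in D -> i' \notin cvars c) ->
    ~ inI th i' ->
    let l' := lsubst1 (LVar i') i l in
    ustep fresh (C, th)
      (Some ([seq cnorm (csubst1 l' i c) | c <- D],
             subst_ext (subst_hat (subst_sub th l' i)) i l'))
| st_decompose C D th vs :
    C =i (LZ, nf_level 0 vs) :: D ->
    sorted ltn (map fst vs) -> all (fun p => p.2 == 0) vs ->
    ustep fresh (C, th)
      (Some ([seq (LMax LZ (LVar p.1), LZ) | p <- vs] ++ D, th))
| st_clash C D th l n x :
    C =i (LZ, l) :: D ->
    (n, x) \in atoms l -> n != 0 ->
    ustep fresh (C, th) None.

Inductive usteps (fresh : pred nat) : option ustate -> option ustate -> Prop :=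
| us_refl s : usteps fresh s s
| us_step st s' s'' :
    ustep fresh st s' -> usteps fresh s' s'' -> usteps fresh (Some st) s''.

From mathcomp Require Import all_boot.
From mathcomp Require Import zify.

Set Implicit Arguments.
Unset Strict Implicit.

(* Idea: interpret levels in the natural numbers, reading z as 0, s as the
   successor and the join as maxn, under a valuation r : nat -> nat of the
   level variables.  Every axiom of the congruence holds in this model, so a
   level substitution theta solving C yields the valuation
   i |-> [[theta i]]_0 satisfying every constraint of C numerically.  We then
   show that each unification step maps a numerically satisfiable constraint
   set to a numerically satisfiable one (Eliminate 2 only needs the fresh
   variable to be valued like the one it replaces), while the Clash
   constraint z = l with a summand s^n x, n > 0, is numerically unsatisfiable.
   Hence no derivation from a solvable C can reach bottom. *)

Fixpoint eval (r : nat -> nat) (l : Level) : nat :=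
  match l with
  | LVar i => r i
  | LZ => 0
  | LS l' => (eval r l').+1
  | LMax a b => maxn (eval r a) (eval r b)
  end.

Lemma eval_lequiv a b : lequiv a b -> forall r, eval r a = eval r b.
Proof.
elim=> {a b} /= => [l|a b _ IH|a b c _ IH1 _ IH2|a b _ IH|a a' b b' _ IH1 _ IH2
  |l1 l2 l3|l1 l2|l1 l2|l|l|l] r; rewrite ?IH ?IH1 ?IH2; lia.
Qed.

Lemma eval_ext r1 r2 l :
  {in vars l, r1 =1 r2} -> eval r1 l = eval r2 l.
Proof.
elim: l => [i||l IH|a IHa b IHb] //= H.
- by apply: H; rewrite inE.
- by rewrite IH.
- by rewrite IHa ?IHb // => x Hx; apply: H; rewrite mem_cat Hx ?orbT.
Qed.

Lemma eval_lsubst r th l : eval r (lsubst th l) = eval (fun i => eval r (th i)) l.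
Proof. by elim: l => //= [l ->|a -> b ->]. Qed.

Definition upd (r : nat -> nat) (j v : nat) : nat -> nat :=
  fun x => if x == j then v else r x.

Lemma eval_lsubst1 r l' j l :
  eval r (lsubst1 l' j l) = eval (upd r j (eval r l')) l.
Proof. by rewrite /lsubst1 eval_lsubst; apply: eval_ext => x _; rewrite /upd; case: eqP. Qed.

Lemma eval_upd_notin r j v l : j \notin vars l -> eval (upd r j v) l = eval r l.
Proof.
move=> Hj; apply: eval_ext => x Hx; rewrite /upd; case: eqP => // Ex.
by rewrite -Ex Hx in Hj.
Qed.

Lemma eval_lsubst1_same r l' j l :
  eval r l' = r j -> eval r (lsubst1 l' j l) = eval r l.
Proof.
by move=> E; rewrite eval_lsubst1 E; apply: eval_ext => x _; rewrite /upd; case: eqP => [->|].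
Qed.

Lemma eval_sn r n l : eval r (sn n l) = eval r l + n.
Proof. by elim: n => [|n IH] /=; rewrite ?addn0 ?IH ?addnS. Qed.

Definition evalJ (r : nat -> nat) (vs : seq (nat * nat)) : nat :=
  foldr (fun p acc => maxn (r p.1 + p.2) acc) 0 vs.

Lemma evalJ_mem r q vs : q \in vs -> r q.1 + q.2 <= evalJ r vs.
Proof. by elim: vs => [|p vs IH] //=; rewrite inE => /orP [/eqP ->|/IH]; lia. Qed.

Lemma eval_joinl r vs : eval r (joinl vs) = evalJ r vs.
Proof. by elim: vs => [|p [|q vs] IH] //=; rewrite eval_sn /= ?maxn0 ?IH. Qed.

Lemma eval_nf_level r k vs : eval r (nf_level k vs) = maxn k (evalJ r vs).
Proof.
case: vs => [|p vs] /=; first by rewrite eval_sn maxn0.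
by have /= -> := eval_joinl r (p :: vs); rewrite eval_sn add0n.
Qed.

Lemma evalJ_ins r p vs : evalJ r (ins p vs) = maxn (r p.1 + p.2) (evalJ r vs).
Proof.
elim: vs => [|q vs IH] //=.
case: ifP => // _; case: ifP => [/eqP E|_] /=.
- by rewrite E addn_maxr; lia.
- by rewrite IH; lia.
Qed.

Lemma evalJ_mergeV r vs ws : evalJ r (mergeV vs ws) = maxn (evalJ r vs) (evalJ r ws).
Proof. by elim: vs => [|p vs IH] /=; rewrite ?max0n // evalJ_ins IH; lia. Qed.

Lemma evalJ_succ r k vs :
  maxn k.+1 (evalJ r [seq (p.1, p.2.+1) | p <- vs]) = (maxn k (evalJ r vs)).+1.
Proof.
elim: vs k => [|p vs IH] k /=; first by rewrite !maxn0.
by have := IH k; rewrite addnS; lia.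
Qed.

Lemma eval_norm r l : eval r l = maxn (norm l).1 (evalJ r (norm l).2).
Proof.
elim: l => [i||l IH|a IHa b IHb] //=; first lia.
- by case: (norm l) IH => k vs /= ->; rewrite evalJ_succ.
- case: (norm a) IHa => ka va /= ->; case: (norm b) IHb => kb vb /= ->.
  by rewrite evalJ_mergeV; lia.
Qed.

Lemma evalJ_filter r (a : pred (nat * nat)) vs k W :
  maxn k (evalJ r vs) = W ->
  (forall p, p \in vs -> ~~ a p -> r p.1 + p.2 < W) ->
  maxn k (evalJ r (filter a vs)) = W.
Proof.
elim: vs k => [|p vs IH] k //= E H.
have Hvs : forall q, q \in vs -> ~~ a q -> r q.1 + q.2 < W.
  by move=> q Hq; apply: H; rewrite inE Hq orbT.
case: ifP => Ha /=.
- by rewrite maxnA; apply: IH; rewrite -?maxnA.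
- have Hp : r p.1 + p.2 < W by apply: H; rewrite ?inE ?eqxx ?Ha.
  by apply: IH => //; lia.
Qed.

Lemma evalJ_sub r vs k m :
  m <= k -> (forall p, p \in vs -> m <= p.2) ->
  maxn (k - m) (evalJ r [seq (p.1, p.2 - m) | p <- vs]) = maxn k (evalJ r vs) - m.
Proof.
elim: vs k => [|p vs IH] k /= Hk H; first by rewrite !maxn0.
have Hp : m <= p.2 by apply: H; rewrite inE eqxx.
have Hvs : forall q, q \in vs -> m <= q.2 by move=> q Hq; apply: H; rewrite inE Hq orbT.
have := IH (maxn k (r p.1 + p.2)) ltac:(lia) Hvs.
by move: (evalJ r [seq _ | _ <- vs]) (evalJ r vs) (r p.1) (p.2) Hp => X Y a b Hb; lia.
Qed.

Lemma foldr_minn_lb x s :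
  foldr minn x s <= x /\ forall y, y \in s -> foldr minn x s <= y.
Proof.
elim: s => [|y s [IH1 IH2]] //=; split; first lia.
by move=> z; rewrite inE => /orP [/eqP ->|/IH2]; lia.
Qed.

(* The summand of vs at the same variable as p, with a larger exponent,
   witnesses that p lies strictly below the value of vs. *)
Lemma dominated_summand r vs p W :
  maxn W (evalJ r vs) = W ->
  ~~ all (fun q : nat * nat => (q.1 != p.1) || (q.2 <= p.2)) vs ->
  r p.1 + p.2 < W.
Proof.
move=> E /allPn [q Hq /=]; rewrite negb_or negbK => /andP [/eqP Eq Hlt].
by have := evalJ_mem r Hq; rewrite Eq; lia.
Qed.

(* Normalizing a numerically satisfied constraint keeps it satisfied: the
   dropped summands are dominated, and both sides lose the same amount. *)
Lemma eval_cnorm_data r k1 vs1 k2 vs2 :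
  maxn k1 (evalJ r vs1) = maxn k2 (evalJ r vs2) ->
  eval r (cnorm_data k1 vs1 k2 vs2).1 = eval r (cnorm_data k1 vs1 k2 vs2).2.
Proof.
move=> E; rewrite /cnorm_data /= !eval_nf_level.
set f1 := filter _ vs1; set f2 := filter _ vs2; set m := foldr minn _ _.
have [Hmk Hms] := foldr_minn_lb (minn k1 k2) (map snd (f1 ++ f2)).
have Hf1 : forall p, p \in f1 -> m <= p.2.
  by move=> p Hp; apply: Hms; apply: map_f; rewrite mem_cat Hp.
have Hf2 : forall p, p \in f2 -> m <= p.2.
  by move=> p Hp; apply: Hms; apply: map_f; rewrite mem_cat Hp orbT.
rewrite !evalJ_sub //; try lia.
set V := maxn k1 (evalJ r vs1).
have HV2 : maxn V (evalJ r vs2) = V by rewrite /V E; lia.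
have HV1 : maxn V (evalJ r vs1) = V by rewrite /V; lia.
have -> : maxn k1 (evalJ r f1) = V.
  by apply: evalJ_filter => // p _; apply: dominated_summand.
have -> // : maxn k2 (evalJ r f2) = V.
by apply: evalJ_filter => [|p _]; [rewrite /V E | apply: dominated_summand].
Qed.

Lemma eval_cnorm r c : eval r c.1 = eval r c.2 -> eval r (cnorm c).1 = eval r (cnorm c).2.
Proof. by rewrite (eval_norm r c.1) (eval_norm r c.2); apply: eval_cnorm_data. Qed.

Lemma atoms_le_eval r l n x : (n, x) \in atoms l -> n <= eval r l.
Proof.
elim: l n x => [i||l IH|a IHa b IHb] n x /=.
- by rewrite inE => /eqP [->].
- by rewrite inE => /eqP [->].
- have Hsucc : (n, x) \in [seq (p.1.+1, p.2) | p <- atoms l] -> n <= (eval r l).+1.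
    by case/mapP => [[m y] Hm [-> _]] /=; have := IH m y Hm; lia.
  by case: l IH Hsucc.
- by rewrite mem_cat => /orP [/IHa|/IHb]; lia.
Qed.

Definition solves (r : nat -> nat) (C : seq cstr) : Prop :=
  forall c, c \in C -> eval r c.1 = eval r c.2.

Definition nat_sat (C : seq cstr) : Prop := exists r, solves r C.

Lemma nat_sat_of_sat th C : sat th C -> nat_sat C.
Proof.
move=> Hth; exists (fun i => eval (fun _ => 0) (th i)) => c Hc.
by rewrite -!eval_lsubst; apply: eval_lequiv; apply: Hth.
Qed.

Lemma solves_split r C c D :
  C =i c :: D -> solves r C -> eval r c.1 = eval r c.2 /\ solves r D.
Proof.
move=> HC Hr; split; first by apply: Hr; rewrite HC inE eqxx.
by move=> d Hd; apply: Hr; rewrite HC inE Hd orbT.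
Qed.

Lemma solves_eliminate r l i D :
  eval r l = r i -> solves r D -> solves r [seq cnorm (csubst1 l i c) | c <- D].
Proof.
move=> Hl Hr _ /mapP [c Hc ->]; apply: eval_cnorm.
by rewrite /csubst1 /= !eval_lsubst1_same //; apply: Hr.
Qed.

(* Eliminate 2: value the fresh variable i' like i; since i' occurs neither
   in l nor in D, this changes nothing but makes l{i'/i} worth r i. *)
Lemma solves_eliminate_fresh r l i i' D :
  eval r l = r i -> i' != i -> i' \notin vars l ->
  (forall c, c \in D -> i' \notin cvars c) -> solves r D ->
  solves (upd r i' (r i)) [seq cnorm (csubst1 (lsubst1 (LVar i') i l) i c) | c <- D].
Proof.
move=> Hl Hii' Hi'l HD Hr; set r' := upd r i' (r i).
have Hr'i : r' i = r i by rewrite /r' /upd eq_sym (negbTE Hii').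
have Hr'l : eval r' l = r' i by rewrite eval_upd_notin // Hr'i.
apply: solves_eliminate.
- rewrite eval_lsubst1 /= {2}/r' /upd eqxx -Hr'i -Hr'l.
  by apply: eval_ext => x _; case: eqP => [->|].
- move=> c Hc; have := HD c Hc; rewrite /cvars mem_cat negb_or => /andP [H1 H2].
  by rewrite !eval_upd_notin //; apply: Hr.
Qed.

(* Each unification step preserves numerical satisfiability; in particular
   Clash, the only step to bottom, never applies to a satisfiable set. *)
Lemma ustep_nat_sat fresh s s' : ustep fresh s s' -> nat_sat s.1 ->
  if s' is Some t then nat_sat t.1 else False.
Proof.
case=> {s s'} /=.
- move=> C D th l HC [r /(solves_split HC) [_ Hr]]; by exists r.
- move=> C D th l l' HC _ [r /(solves_split HC) [Hll' Hr]]; exists r => c.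
  by rewrite inE => /orP [/eqP -> //|]; apply: Hr.
- move=> C D th i l HC _ [r /(solves_split HC) [/= Hil Hr]].
  by exists r; apply: solves_eliminate => //; lia.
- move=> C D th i l i' HC _ _ Hii' Hi'l HD _ [r /(solves_split HC) [/= Hil Hr]].
  by exists (upd r i' (r i)); apply: solves_eliminate_fresh => //; lia.
- move=> C D th vs HC _ Hvs [r /(solves_split HC) [/= Hnf Hr]]; exists r => c.
  rewrite mem_cat => /orP [/mapP [p Hp ->]|]; last exact: Hr.
  by move: Hnf; rewrite eval_nf_level /= => Hnf; have := evalJ_mem r Hp; lia.
- move=> C D th l n x HC Hat Hn [r /(solves_split HC) [/= Hl _]].
  by have := atoms_le_eval r Hat; lia.
Qed.

Lemma usteps_nat_sat fresh s t : usteps fresh s t ->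
  (if s is Some u then nat_sat u.1 else False) ->
  if t is Some u then nat_sat u.1 else False.
Proof. by elim=> // st s' s'' Hst _ IH H; apply: IH; apply: ustep_nat_sat Hst H. Qed.

Theorem mainTheorem10 (fresh : pred nat)
  (fresh_infinite : forall n, exists i, n <= i /\ fresh i)
  (fresh_proper : exists i, ~~ fresh i)
  (C : seq cstr)
  (HCnf : forall c, c \in C -> cstr_nf c)
  (HCfresh : forall c, c \in C -> forall i, i \in cvars c -> ~~ fresh i)
  (Hbot : usteps fresh (Some (C, idS)) None) :
  ~ exists theta : nat -> Level, sat theta C.
Proof.
move=> [th /nat_sat_of_sat HC].
exact: (usteps_nat_sat Hbot HC).
Qed.
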